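(* Let $G$ be a finite simple graph having a Hamiltonian path $P=x_1x_2\dots x_n$ such that $G$ has no two secant edges with respect to $P$. Then $\chi(G)\le 3$.
   Context: Edges of $G$ are secant with respect to $P$ if they are secant with respect to the enumeration $x_1x_2\dots x_n$ induced by $P$: an edge $x_ix_j$ is a jump if $|i-j|>1$, and two jumps $x_lx_m$, $x_px_q$ with $l<m$, $p<q$ are secant if $l<p<m<q$ or $p<l<q<m$. *)

From mathcomp Require Import all_boot.
Set Implicit Arguments. Unset Strict Implicit. Unset Printing Implicit Defensive.

Definition simple_graph (T : finType) (e : rel T) : Prop :=
  symmetric e /\ irreflexive e.

Definition hamiltonian_path (T : finType) (e : rel T) (p : seq T) : Prop :=
  [/\ uniq p, (forall x : T, x \in p) & sorted e p].

Definition pos (T : finType) (p : seq T) (x : T) : nat := index x p.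

Definition jump (T : finType) (e : rel T) (p : seq T) (x y : T) : bool :=
  e x y && ((pos p x + 1 < pos p y) || (pos p y + 1 < pos p x)).

Definition secant (T : finType) (e : rel T) (p : seq T) (a b c d : T) : bool :=
  let l := minn (pos p a) (pos p b) in
  let m := maxn (pos p a) (pos p b) in
  let p' := minn (pos p c) (pos p d) in
  let q := maxn (pos p c) (pos p d) in
  [&& jump e p a b, jump e p c d &
      ((l < p' < m) && (m < q)) || ((p' < l < q) && (q < m))].

Definition no_secant_edges (T : finType) (e : rel T) (p : seq T) : Prop :=
  forall a b c d : T, ~~ secant e p a b c d.

(* Proper k-colouring; chi(G) <= k iff such a colouring exists. *)
Definition proper_coloring (T : finType) (e : rel T) (k : nat)
  (f : T -> 'I_k) : Prop :=
  forall x y : T, e x y -> f x != f y.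

Definition colorable (T : finType) (e : rel T) (k : nat) : Prop :=
  exists f : T -> 'I_k, proper_coloring e f.

(* Number the vertices 0, ..., n-1 along the path; the edges are then
   pairwise non-crossing chords over the path.  We 3-colour every interval
   [lo, hi] with prescribed distinct colours at its ends.  Let k be the
   farthest vertex before hi joined to lo (or lo + 1 if there is none).  No
   edge other than lo-hi can pass over k: one starting at lo would contradict
   the choice of k, one starting inside (lo, k) would cross the edge lo-k.
   So colour [lo, k] and [k, hi] recursively, giving k the third colour. *)

From mathcomp Require Import all_boot.
From mathcomp Require Import zify.

Set Implicit Arguments. Unset Strict Implicit. Unset Printing Implicit Defensive.

Section NoncrossingColoring.

Variable E : rel nat.
Hypothesis E_noncrossing :
  forall i k j l, i < k < j -> j < l -> E i j -> E k l -> False.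

Definition proper_on (lo hi : nat) (c : nat -> nat) : Prop :=
  forall u v, lo <= u -> u < v -> v <= hi -> E u v -> c u != c v.

Lemma straddling_edge lo k hi u v :
    lo < k -> (k == lo.+1) || E lo k -> (forall j, j < hi -> E lo j -> j <= k) ->
    lo <= u < k -> k < v <= hi -> E u v -> u = lo /\ v = hi.
Proof.
move=> lo_k k_nbr k_max /andP[lo_u u_k] /andP[k_v v_hi] Euv.
have [lo_lt_u | u_eq_lo] : lo < u \/ u = lo by lia.
  case/orP: k_nbr => [/eqP k_eq | Elok]; first lia.
  by case: (E_noncrossing (i:=lo) (k:=u) (j:=k) _ k_v Elok Euv); rewrite lo_lt_u.
subst u; split=> //; apply/eqP; rewrite eqn_leq v_hi leqNgt.
by apply: contraTN k_v => v_lt_hi; rewrite -leqNgt k_max.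
Qed.

Lemma proper_on_glue lo k hi c1 c2 :
    proper_on lo k c1 -> proper_on k hi c2 -> c1 k = c2 k ->
    (forall u v, lo <= u < k -> k < v <= hi -> E u v -> c1 u != c2 v) ->
  proper_on lo hi (fun x => if x <= k then c1 x else c2 x).
Proof.
move=> c1P c2P c12k cross u v lo_u u_v v_hi Euv /=.
case: (leqP v k) => [v_k | k_v].
  by rewrite (leq_trans (ltnW u_v) v_k); apply: c1P.
case: (ltngtP u k) => [u_k | k_u | u_eq_k].
- by apply: cross => //; lia.
- by apply: c2P => //; apply: ltnW.
- by subst u; rewrite c12k; apply: c2P; rewrite ?leqnn.
Qed.

Lemma proper_on_3colorable lo hi a b :
    lo < hi -> a < 3 -> b < 3 -> a != b ->
  exists c : nat -> nat,
    [/\ c lo = a, c hi = b, forall x, c x < 3 & proper_on lo hi c].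
Proof.
move=> lo_hi; have [d len_d] : exists d, hi - lo = d by exists (hi - lo).
elim/ltn_ind: d lo hi a b len_d lo_hi => d IH lo hi a b len_d lo_hi ha hb ab.
have [hi_eq | lo1_hi] := eqVneq hi lo.+1.
  exists (fun x => if x <= lo then a else b); split=> //.
  - by rewrite leqnn.
  - by rewrite hi_eq ltnn.
  - by move=> x; case: ifP.
  by move=> u v lo_u u_v v_hi _; rewrite ifT ?ifF; lia.
pose nbr j := (j < hi) && ((j == lo.+1) || E lo j).
have nbr_lo1 : nbr lo.+1 by rewrite /nbr eqxx /= andbT; lia.
have nbr_bounded j : nbr j -> j <= hi by case/andP => /ltnW.
have [k /andP[k_hi k_nbr] k_max] := ex_maxnP (ex_intro nbr _ nbr_lo1) nbr_bounded.
have lo_k : lo < k by have := k_max _ nbr_lo1.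
pose third := 3 - a - b.
have [c1 [c1lo c1k c1_lt3 c1P]] := IH (k - lo) ltac:(lia) lo k a third
  erefl lo_k ha ltac:(lia) ltac:(lia).
have [c2 [c2k c2hi c2_lt3 c2P]] := IH (hi - k) ltac:(lia) k hi third b
  erefl k_hi ltac:(lia) hb ltac:(lia).
exists (fun x => if x <= k then c1 x else c2 x); split.
- by rewrite ltnW.
- by rewrite leqNgt k_hi.
- by move=> x; case: ifP.
apply: proper_on_glue => //; first by rewrite c1k c2k.
move=> u v u_range v_range Euv.
have k_max' j : j < hi -> E lo j -> j <= k.
  by move=> j_hi Eloj; rewrite k_max // /nbr j_hi Eloj orbT.
have [-> ->] := straddling_edge lo_k k_nbr k_max' u_range v_range Euv.
by rewrite c1lo c2hi.
Qed.

End NoncrossingColoring.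

Lemma no_secant_edges_noncrossing (T : finType) (e : rel T) (p : seq T) x0 i k j l :
    uniq p -> no_secant_edges e p -> i < k < j -> j < l -> l < size p ->
    e (nth x0 p i) (nth x0 p j) -> e (nth x0 p k) (nth x0 p l) -> False.
Proof.
move=> up nsec /andP[i_k k_j] j_l l_n Eij Ekl.
have posK r : r < size p -> pos p (nth x0 p r) = r by move=> ?; rewrite /pos index_uniq.
have /negP := nsec (nth x0 p i) (nth x0 p j) (nth x0 p k) (nth x0 p l); apply.
rewrite /secant /jump Eij Ekl !posK /=; lia.
Qed.

Theorem proposition3 (T : finType) (e : rel T) (p : seq T) :
  simple_graph e -> hamiltonian_path e p -> no_secant_edges e p ->
  colorable e 3.
Proof.
move=> [e_sym e_irr] [up p_all _] nsec.
case: p up p_all nsec => [|x0 p'] up p_all nsec.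
  by exists (fun _ => ord0) => x; have := p_all x.
set p := x0 :: p' in up p_all nsec *.
(* The guard [v < size p] keeps the default values of [nth] out of [E]. *)
pose E u v := (v < size p) && e (nth x0 p u) (nth x0 p v).
have E_noncrossing i k j l : i < k < j -> j < l -> E i j -> E k l -> False.
  move=> ikj j_l /andP[_ Eij] /andP[l_n Ekl].
  exact: (no_secant_edges_noncrossing up nsec ikj j_l l_n Eij Ekl).
(* Colouring up to [size p], one past the last vertex, spares the one-vertex case. *)
have [c [_ _ c_lt3 cP]] :=
  proper_on_3colorable E_noncrossing (a := 0) (b := 1) (ltn0Sn (size p')) erefl erefl erefl.
exists (fun x => Ordinal (c_lt3 (index x p))).
suff cE x y : index x p < index y p -> e x y -> c (index x p) != c (index y p).
  move=> x y exy; rewrite -val_eqE /=.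
  case: (ltngtP (index x p) (index y p)) => [xy | yx | xy_eq]; first exact: cE.
  - by rewrite eq_sym; apply: cE; rewrite // e_sym.
  - by move: exy; rewrite (index_inj x0 (p_all x) (p_all y) xy_eq) e_irr.
move=> xy exy; have y_lt_n : index y p < size p by rewrite index_mem.
by apply: cP; rewrite ?(ltnW y_lt_n) // /E y_lt_n !nth_index.
Qed.
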